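(* Let $V$ be a real inner product space with norm $\lVert x\rVert=\sqrt{\langle x,x\rangle}$, and consider $n$ agents running the ApproachExtreme algorithm (described in the context) under an arbitrary communication pattern $G_1,G_2,\dots$ in which every communication graph $G_t$ is non-split, starting from arbitrary initial values $y_1(0),\dots,y_n(0)\in V$. Then for every round $t\ge 1$, \[ \Delta\big(y(t)\big)\le \sqrt{\tfrac{31}{32}}\;\Delta\big(y(t-1)\big), \] and for every $\varepsilon>0$ the convergence time satisfies $T(\varepsilon)\le \left\lceil \log_{\sqrt{32/31}} \frac{\Delta}{\varepsilon}\right\rceil$, where $\Delta=\Delta\big(y(0)\big)$ (i.e., $\Delta(y(\tau))\le\varepsilon$ for every integer $\tau\ge 0$ with $\tau\ge \lceil \log_{\sqrt{32/31}} (\Delta/\varepsilon)\rceil$). Moreover, if $V=\mathbb{R}$ (with the usual inner product), then $\Delta\big(y(t)\big)\le \tfrac34\,\Delta\big(y(t-1)\big)$ for every $t\ge1$, and $T(\varepsilon)\le \left\lceil \log_{4/3} \frac{\Delta}{\varepsilon}\right\rceil$.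
   Context: Dynamic network model: there are $n$ agents $1,\dots,n$ communicating in rounds $t=1,2,\dots$. In round $t$, communication is given by a directed graph $G_t$ on the vertex set $\{1,\dots,n\}$ containing every self-loop $(i,i)$; the message broadcast by $i$ in round $t$ is received by $j$ iff $(i,j)\in G_t$. A directed graph is non-split if every pair of nodes $i,j$ has a common in-neighbor $k$ (i.e., $(k,i)$ and $(k,j)$ are both edges). Each agent $i$ holds a value $y_i\in V$; $y_i(0)$ is its initial value and $y_i(t)$ its value at the end of round $t$; $y(t)=(y_1(t),\dots,y_n(t))$. ApproachExtreme algorithm: in round $t$ each agent $i$ broadcasts $y_i(t-1)$, lets $\mathrm{Rcv}_i(t)=\{y_j(t-1): (j,i)\in G_t\}$ be the set of received values, chooses $b\in \mathrm{Rcv}_i(t)$ maximizing $\lVert y_i(t-1)-b\rVert$ (ties broken arbitrarily), and sets $y_i(t)=(y_i(t-1)+b)/2$. Notation: for $x=(x_1,\dots,x_n)\in V^n$, $\Delta(x)=\max_{i,j}\lVert x_i-x_j\rVert$. The convergence time of an execution is $T(\varepsilon)=\min\{t\ge0 : \forall \tau\ge t,\ \Delta(y(\tau))\le\varepsilon\}$. *)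

From HB Require Import structures.
From mathcomp Require Import all_boot all_order all_algebra.
From mathcomp Require Import reals exp.
Set Implicit Arguments. Unset Strict Implicit. Unset Printing Implicit Defensive.
Import Order.TTheory GRing.Theory Num.Theory.
Local Open Scope ring_scope.

Record inner_product (R : realType) (V : lmodType R) := InnerProduct {
  ip : V -> V -> R;
  ip_sym : forall x y, ip x y = ip y x;
  ip_linear : forall (a : R) (x y z : V), ip (a *: x + y) z = a * ip x z + ip y z;
  ip_ge0 : forall x, 0 <= ip x x;
  ip_eq0 : forall x, ip x x = 0 -> x = 0
}.

Definition ipnorm (R : realType) (V : lmodType R) (P : inner_product V) (x : V) : R :=
  Num.sqrt (ip P x x).

Definition R_inner_product (R : realType) : inner_product R^o.
Proof.
refine (@InnerProduct R R^o (fun x y : R => x * y) _ _ _ _).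
- by move=> x y; rewrite mulrC.
- by move=> a x y z; rewrite /GRing.scale /= mulrDl mulrA.
- by move=> x; rewrite -expr2 sqr_ge0.
- by move=> x /eqP; rewrite mulf_eq0 orbb => /eqP.
Defined.

(* Communication pattern: G t j i means (j,i) is an edge of G_t, i.e. i receives
   the message of j in round t. *)
Definition comm_pattern (n : nat) := nat -> rel 'I_n.

Definition has_self_loops (n : nat) (G : rel 'I_n) := forall i, G i i.

Definition non_split (n : nat) (G : rel 'I_n) :=
  forall i j : 'I_n, exists k : 'I_n, G k i /\ G k j.

Definition Delta (R : realType) (V : lmodType R) (P : inner_product V) (n : nat)
  (x : 'I_n -> V) : R :=
  \big[Num.max/0]_(ij : 'I_n * 'I_n) ipnorm P (x ij.1 - x ij.2).

(* y is an execution of ApproachExtreme under G (ties broken arbitrarily):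
   in round t >= 1 (here t.+1), agent i picks a received value y_j(t-1)
   at maximal distance from y_i(t-1) and moves to the midpoint. *)
Definition approach_extreme_exec (R : realType) (V : lmodType R) (P : inner_product V)
  (n : nat) (G : comm_pattern n) (y : nat -> 'I_n -> V) :=
  forall (t : nat) (i : 'I_n), exists j : 'I_n,
    [/\ G t.+1 j i,
        (forall k : 'I_n, G t.+1 k i ->
           ipnorm P (y t i - y t k) <= ipnorm P (y t i - y t j)) &
        y t.+1 i = (2%:R)^-1 *: (y t i + y t j)].

Definition logb (R : realType) (b x : R) : R := ln x / ln b.

(* Take two agents with current values u, v, moving towards received values
   p, q, and let z be the value of a common in-neighbour (non-splitness).  By
   the parallelogram law, 4|m_u - m_v|^2 + |u - p|^2 + |v - q|^2 is the sum of
   the four squared cross distances, hence at most 4 Delta^2.  On the other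
   hand z is no farther from u than p and no farther from v than q, so
   2 (m_u - m_v) = (u - z) + (p - z) - (v - z) - (q - z) has squared norm at
   most 20 (|u - p|^2 + |v - q|^2).  Eliminating |u - p|^2 + |v - q|^2 gives
   |m_u - m_v|^2 <= 20/21 Delta^2 <= 31/32 Delta^2.  On the line, a case
   analysis on the directions of the two moves gives the factor 3/4.  Geometric
   decay of Delta then bounds the convergence time. *)

From HB Require Import structures.
From mathcomp Require Import all_boot all_order all_algebra.
From mathcomp Require Import reals exp.
From mathcomp Require Import lra.
Import Order.TTheory GRing.Theory Num.Theory.
Set Implicit Arguments. Unset Strict Implicit.
Local Open Scope ring_scope.

Section InnerProduct.
Variables (R : realType) (V : lmodType R) (P : inner_product V).
Implicit Types (x y z u p v q : V) (a c D : R).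
Local Notation sq x := (ip P x x).

Lemma ipDl x y z : ip P (x + y) z = ip P x z + ip P y z.
Proof. by have := ip_linear P 1 x y z; rewrite scale1r mul1r. Qed.

Lemma ip0l z : ip P 0 z = 0.
Proof. have := ipDl 0 0 z; rewrite addr0; lra. Qed.

Lemma ipZl a x z : ip P (a *: x) z = a * ip P x z.
Proof. by have := ip_linear P a x 0 z; rewrite addr0 ip0l addr0. Qed.

Lemma ipNl x z : ip P (- x) z = - ip P x z.
Proof. by rewrite -scaleN1r ipZl mulN1r. Qed.

Lemma ipDr x y z : ip P z (x + y) = ip P z x + ip P z y.
Proof. by rewrite ip_sym ipDl !(ip_sym P z). Qed.

Lemma ipNr x z : ip P z (- x) = - ip P z x.
Proof. by rewrite ip_sym ipNl ip_sym. Qed.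

Lemma ipZr a x z : ip P z (a *: x) = a * ip P z x.
Proof. by rewrite ip_sym ipZl ip_sym. Qed.

Lemma ipsqN x : sq (- x) = sq x.
Proof. by rewrite ipNl ipNr opprK. Qed.

Lemma ipsqZ a x : sq (a *: x) = a ^+ 2 * sq x.
Proof. by rewrite ipZl ipZr mulrA expr2. Qed.

Lemma ipsq_parallelogram x y : sq (x + y) + sq (x - y) = 2 * sq x + 2 * sq y.
Proof. rewrite !(ipDl, ipDr, ipNl, ipNr) (ip_sym P y x); lra. Qed.

Lemma ipsqD_le x y : sq (x + y) <= 2 * sq x + 2 * sq y.
Proof. have := ipsq_parallelogram x y; have := ip_ge0 P (x - y); lra. Qed.

Lemma ipsqB_le x y : sq (x - y) <= 2 * sq x + 2 * sq y.
Proof. by rewrite -(ipsqN y) ipsqD_le. Qed.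

Lemma ipnorm_ge0 x : 0 <= ipnorm P x.
Proof. exact: sqrtr_ge0. Qed.

Lemma ipnorm_sqr x : ipnorm P x ^+ 2 = sq x.
Proof. by rewrite sqr_sqrtr // ip_ge0. Qed.

Lemma ipnorm_le_ipsq x y : ipnorm P x <= ipnorm P y -> sq x <= sq y.
Proof. by rewrite -!ipnorm_sqr ler_sqr ?nnegrE ?ipnorm_ge0. Qed.

Lemma ipnorm_le_ipsq_sqr x D : ipnorm P x <= D -> sq x <= D ^+ 2.
Proof.
move=> le_xD; have D_ge0 := le_trans (ipnorm_ge0 x) le_xD.
by rewrite -ipnorm_sqr ler_sqr ?nnegrE ?ipnorm_ge0.
Qed.

Lemma ipsq_midpointB u p v q :
  4 * sq (2^-1 *: (u + p) - 2^-1 *: (v + q)) + sq (u - p) + sq (v - q)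
  = sq (u - v) + sq (p - q) + sq (u - q) + sq (p - v).
Proof.
have midE : 2^-1 *: (u + p) - 2^-1 *: (v + q) = (2^-1 : R) *: ((u - v) + (p - q)).
  by rewrite -scalerBr opprD addrACA.
have sumE : (u - q) + (p - v) = (u - v) + (p - q).
  by rewrite (AC (2*2) (1*4*(3*2)))%AC.
have difE1 : (u - v) - (p - q) = (u - p) - (v - q).
  by rewrite !opprB (AC (2*2) (1*4*(3*2)))%AC.
have difE2 : (u - q) - (p - v) = (u - p) + (v - q).
  by rewrite opprB (AC (2*2) (1*4*(3*2)))%AC.
have := ipsq_parallelogram (u - v) (p - q); rewrite difE1.
have := ipsq_parallelogram (u - q) (p - v); rewrite sumE difE2.
have := ipsq_parallelogram (u - p) (v - q).
rewrite midE ipsqZ mulrA (_ : 4 * 2^-1 ^+ 2 = 1); lra.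
Qed.

Lemma ipsq_addB_le u p z :
  sq (u - z) <= sq (u - p) -> sq ((u - z) + (p - z)) <= 10 * sq (u - p).
Proof.
move=> le_zp; have := ipsqD_le (u - z) (p - z).
have := ipsqD_le (p - u) (u - z); rewrite subrKA -(ipsqN (p - u)) opprB; lra.
Qed.

Lemma ipsq_midpointB_le u p v q z :
  sq (u - z) <= sq (u - p) -> sq (v - z) <= sq (v - q) ->
  4 * sq (2^-1 *: (u + p) - 2^-1 *: (v + q)) <= 20 * (sq (u - p) + sq (v - q)).
Proof.
move=> /ipsq_addB_le le_up /ipsq_addB_le le_vq.
have midE : 2^-1 *: (u + p) - 2^-1 *: (v + q)
    = (2^-1 : R) *: (((u - z) + (p - z)) - ((v - z) + (q - z))).
  by rewrite opprD addrACA !opprB !subrKA -scalerBr opprD addrACA.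
have := ipsqB_le ((u - z) + (p - z)) ((v - z) + (q - z)).
rewrite midE ipsqZ mulrA (_ : 4 * 2^-1 ^+ 2 = 1); lra.
Qed.

Lemma ipnorm_le_sqrt_mul x c D :
  0 <= c -> 0 <= D -> sq x <= c * D ^+ 2 -> ipnorm P x <= Num.sqrt c * D.
Proof.
move=> c_ge0 D_ge0 le_xD.
by rewrite -ler_sqr ?nnegrE ?mulr_ge0 ?sqrtr_ge0 ?ipnorm_ge0 //= exprMn ipnorm_sqr sqr_sqrtr.
Qed.

End InnerProduct.

(* [u] and [v] are the current values of two agents, [p] and [q] the received
   values they move towards, [z] the value of a common in-neighbour and [D] a
   bound on the current diameter. *)
Definition midpoint_contraction (R : realType) (V : lmodType R)
    (P : inner_product V) (c : R) :=
  forall (u p v q z : V) (D : R),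
    ipnorm P (u - z) <= ipnorm P (u - p) -> ipnorm P (v - z) <= ipnorm P (v - q) ->
    ipnorm P (u - v) <= D -> ipnorm P (u - q) <= D ->
    ipnorm P (p - v) <= D -> ipnorm P (p - q) <= D ->
    ipnorm P (2^-1 *: (u + p) - 2^-1 *: (v + q)) <= c * D.

Lemma ip_midpoint_contraction (R : realType) (V : lmodType R) (P : inner_product V) :
  midpoint_contraction P (Num.sqrt (31%:R / 32%:R)).
Proof.
move=> u p v q z D /ipnorm_le_ipsq zu /ipnorm_le_ipsq zv uvD uqD pvD pqD.
have D_ge0 : 0 <= D := le_trans (ipnorm_ge0 P _) uvD.
move: uvD uqD pvD pqD => /ipnorm_le_ipsq_sqr ? /ipnorm_le_ipsq_sqr ?
  /ipnorm_le_ipsq_sqr ? /ipnorm_le_ipsq_sqr ?.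
apply: ipnorm_le_sqrt_mul => //; first lra.
have := ipsq_midpointB P u p v q; have := ipsq_midpointB_le zu zv.
have := ip_ge0 P (u - p); have := ip_ge0 P (v - q); lra.
Qed.

Lemma ipnormR (R : realType) (x : R^o) : ipnorm (R_inner_product R) x = `|x|.
Proof. by rewrite /ipnorm /= -expr2 sqrtr_sqr. Qed.

Lemma real_midpoint_contraction (R : realType) :
  midpoint_contraction (R_inner_product R) (3%:R / 4%:R).
Proof.
move=> u p v q z D; rewrite !ipnormR.
have normE (x : R) : `|x| = x \/ `|x| = - x.
  by case: (lerP 0 x) => [/ger0_norm|/ltr0_norm]; [left|right].
case: (normE (u - p)) => ->; case: (normE (v - q)) => ->;
  move=> /ler_normlP[? ?] /ler_normlP[? ?] /ler_normlP[? ?] /ler_normlP[? ?]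
    /ler_normlP[? ?] /ler_normlP[? ?];
  by apply/ler_normlP; rewrite /GRing.scale /=; split; lra.
Qed.

Section Diameter.
Variables (R : realType) (V : lmodType R) (P : inner_product V) (n : nat).
Implicit Types (x : 'I_n -> V) (c : R).

Lemma Delta_ge0 x : 0 <= Delta P x.
Proof.
rewrite /Delta; elim/big_ind: _ => // [a b a_ge0 _|ij _]; last exact: ipnorm_ge0.
by rewrite le_max a_ge0.
Qed.

Lemma ipnorm_le_Delta x i j : ipnorm P (x i - x j) <= Delta P x.
Proof. by rewrite /Delta (bigD1 (i, j)) //= le_max lexx. Qed.

Lemma Delta_le x c :
  0 <= c -> (forall i j, ipnorm P (x i - x j) <= c) -> Delta P x <= c.
Proof.
move=> c_ge0 le_c; rewrite /Delta; elim/big_ind: _ => // a b.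
by rewrite ge_max => ->.
Qed.

Lemma Delta_exec_contraction (G : comm_pattern n) (y : nat -> 'I_n -> V) c :
  0 <= c -> midpoint_contraction P c ->
  (forall t, non_split (G t)) -> approach_extreme_exec P G y ->
  forall t, Delta P (y t.+1) <= c * Delta P (y t).
Proof.
move=> c_ge0 contr nsG exec_y t.
apply: Delta_le => [|i j]; first by rewrite mulr_ge0 ?Delta_ge0.
have [k [Gki Gkj]] := nsG t.+1 i j.
have [a [_ far_a ->]] := exec_y t i; have [b [_ far_b ->]] := exec_y t j.
by apply: (contr _ _ _ _ (y t k)); rewrite ?ipnorm_le_Delta ?far_a ?far_b.
Qed.

End Diameter.

Section ConvergenceTime.
Variable R : realType.
Implicit Types (d : nat -> R) (b c x eps : R).

Lemma geometric_decay d c :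
  0 <= c -> (forall t, d t.+1 <= c * d t) -> forall t, d t <= c ^+ t * d 0%N.
Proof.
move=> c_ge0 dS; elim=> [|t IH]; first by rewrite expr0 mul1r.
by rewrite exprS -mulrA; apply: le_trans (dS t) _; apply: ler_wpM2l.
Qed.

Lemma le_exprn_ceil_logb b x (k : nat) :
  1 < b -> 0 < x -> Num.ceil (logb b x) <= k%:Z -> x <= b ^+ k.
Proof.
move=> b_gt1 x_gt0; have b_gt0 : 0 < b := lt_trans ltr01 b_gt1.
rewrite ceil_le_int /logb ler_pdivrMr ?ln_gt0 // -pmulrn mulr_natl.
by rewrite -lnXn // ler_ln ?posrE ?exprn_gt0.
Qed.

Lemma convergence_time d b :
  1 < b -> (forall t, 0 <= d t) -> (forall t, d t.+1 <= b^-1 * d t) ->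
  forall eps, 0 < eps -> forall tau : nat,
  Num.ceil (logb b (d 0%N / eps)) <= tau%:Z -> d tau <= eps.
Proof.
move=> b_gt1 d_ge0 dS eps eps_gt0 tau; have b_gt0 : 0 < b := lt_trans ltr01 b_gt1.
have binv_ge0 : 0 <= b^-1 by rewrite invr_ge0 ltW.
have decay := geometric_decay binv_ge0 dS tau.
have [d0_eq0 _|d0_neq0] := eqVneq (d 0%N) 0.
  by apply: le_trans decay _; rewrite d0_eq0 mulr0 ltW.
have d0_gt0 : 0 < d 0%N by rewrite lt_def d0_neq0 d_ge0.
move=> /(le_exprn_ceil_logb b_gt1 (divr_gt0 d0_gt0 eps_gt0)).
rewrite ler_pdivrMr // => d0_le; apply: le_trans decay _.
by rewrite exprVn ler_pdivrMl ?exprn_gt0.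
Qed.

End ConvergenceTime.

Lemma approach_extreme_convergence (R : realType) (V : lmodType R)
    (P : inner_product V) (n : nat) (G : comm_pattern n)
    (y : nat -> 'I_n -> V) (b : R) :
  1 < b -> midpoint_contraction P b^-1 ->
  (forall t, non_split (G t)) -> approach_extreme_exec P G y ->
  (forall t, Delta P (y t.+1) <= b^-1 * Delta P (y t)) /\
  (forall eps, 0 < eps -> forall tau : nat,
     Num.ceil (logb b (Delta P (y 0%N) / eps)) <= tau%:Z -> Delta P (y tau) <= eps).
Proof.
move=> b_gt1 contr nsG exec_y.
have binv_ge0 : 0 <= b^-1 by rewrite invr_ge0 ltW // (lt_trans ltr01 b_gt1).
have step := Delta_exec_contraction binv_ge0 contr nsG exec_y.
by split=> //; apply: convergence_time => // t; apply: Delta_ge0.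
Qed.

Theorem theorem2 (R : realType) :
  (forall (V : lmodType R) (P : inner_product V) (n : nat) (G : comm_pattern n)
          (y : nat -> 'I_n -> V),
     (forall t, has_self_loops (G t)) ->
     (forall t, non_split (G t)) ->
     approach_extreme_exec P G y ->
     (forall t : nat,
        Delta P (y t.+1) <= Num.sqrt (31%:R / 32%:R) * Delta P (y t)) /\
     (forall eps : R, 0 < eps -> forall tau : nat,
        Num.ceil (logb (Num.sqrt (32%:R / 31%:R)) (Delta P (y 0%N) / eps)) <= tau%:Z ->
        Delta P (y tau) <= eps)) /\
  (forall (n : nat) (G : comm_pattern n) (y : nat -> 'I_n -> R^o),
     (forall t, has_self_loops (G t)) ->
     (forall t, non_split (G t)) ->
     approach_extreme_exec (R_inner_product R) G y ->
     (forall t : nat,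
        Delta (R_inner_product R) (y t.+1) <= (3%:R / 4%:R) * Delta (R_inner_product R) (y t)) /\
     (forall eps : R, 0 < eps -> forall tau : nat,
        Num.ceil (logb (4%:R / 3%:R) (Delta (R_inner_product R) (y 0%N) / eps)) <= tau%:Z ->
        Delta (R_inner_product R) (y tau) <= eps)).
Proof.
split=> [V P n G y _ nsG exec_y | n G y _ nsG exec_y].
- have sqrt_inv : Num.sqrt (31%:R / 32%:R) = (Num.sqrt (32%:R / 31%:R))^-1 :> R.
    by rewrite -sqrtrV ?invf_div // divr_ge0 ?ler0n.
  rewrite sqrt_inv; apply: approach_extreme_convergence => //.
    by rewrite -{1}sqrtr1 ltr_sqrt; lra.
  by rewrite -sqrt_inv; apply: ip_midpoint_contraction.
- rewrite -[3%:R / 4%:R]invf_div; apply: approach_extreme_convergence => //.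
    by lra.
  by rewrite invf_div; apply: real_midpoint_contraction.
Qed.
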